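(* Fix $n\in\{1,\dots,N\}$ and write $U(y,t)=U(v_n,y,t)$. Then for $t\in[0,1)$: $U_t+\beta(U(y+1,t)-2U(y,t)+U(y-1,t))=0$ for $y>\overline m_n$ or $y<\underline m_n$; $U_t+\beta(U(y+1,t)-2U(y,t)+U(y-1,t))=(p(\underline m_n,t)-v_n)\beta$ for $y=\overline m_n$; $U_t+\beta(U(y+1,t)-2U(y,t)+U(y-1,t))=(v_n-p(\overline m_n,t))\beta$ for $y=\underline m_n$; $U(y,t)-U(y+1,t)-(v_n-p(y,t))=0$ for $y\ge\overline m_n$; $U(y,t)-U(y-1,t)+(v_n-p(y,t))=0$ for $y\le\underline m_n$.
   Context: Order size $1$, $N<\infty$, $v_1<\dots<v_N$. $Z$ is the difference of two independent Poisson processes with intensity $\beta>0$; $\mathbb{E}^y$ denotes expectation with $Z_0=y$. Strictly increasing $(a_n)_{n=1}^{N+1}\subset\mathbb{Z}\cup\{\pm\infty\}$, $a_1=-\infty$, $a_{N+1}=\infty$, $\bigcup_n[a_n,a_{n+1})=\mathbb{Z}\cup\{-\infty\}$, $m_n=(a_n+a_{n+1}-1)/2\notin\mathbb{Z}$, $\underline m_n=\lfloor m_n\rfloor$, $\overline m_n=\lceil m_n\rceil$ (with $\underline m_1=\overline m_1=-\infty$, $\underline m_N=\overline m_N=+\infty$). $P(y)=v_n$ for $y\in[a_n,a_{n+1})$; $p(y,t)=\mathbb{E}^y[P(Z_{1-t})]$; $A(y)=P(y+1)$, $B(y)=P(y-1)$. $U(v_n,y,1)=\sum_{j=y}^{a_n-1}(v_n-A(j))\mathbf{1}_{\{y\le\underline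 m_n\}}+\sum_{j=a_{n+1}}^y(B(j)-v_n)\mathbf{1}_{\{y\ge\overline m_n\}}$ (empty sums $0$); for $t<1$, $U(v_n,y,t)=U(v_n,y,1)+\beta\int_t^1(p(y,r)-p(y-1,r))dr$ if $y\ge\overline m_n$, and $U(v_n,y,t)=U(v_n,y,1)+\beta\int_t^1(p(y+1,r)-p(y,r))dr$ if $y\le\underline m_n$. *)

From Stdlib Require Import Reals ZArith Lia List.
From Coquelicot Require Import Coquelicot.
Open Scope R_scope.

Definition pois (lam : R) (k : nat) : R := exp (- lam) * lam ^ k / INR (fact k).

(* p(y,t) = E^y[P(Z_{1-t})] where Z_{1-t} - Z_0 = N1 - N2, with N1, N2 independent
   Poisson(beta*(1-t)) variables (the two Poisson processes at time 1-t). *)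
Definition pZ (beta : R) (P : Z -> R) (y : Z) (t : R) : R :=
  Series (fun i => Series (fun j =>
    pois (beta * (1 - t)) i * pois (beta * (1 - t)) j
      * P (y + Z.of_nat i - Z.of_nat j)%Z)).

Inductive zbar : Type := ZFin (z : Z) | ZNinf | ZPinf.

Definition zleb (x y : zbar) : bool :=
  match x, y with
  | ZNinf, _ => true
  | _, ZPinf => true
  | ZFin a, ZFin b => Z.leb a b
  | _, _ => false
  end.

Definition zltb (x y : zbar) : bool := zleb x y && negb (zleb y x).

(* thresholds: a_1 = -oo, a_{N+1} = +oo, a_k (2 <= k <= N) given by a k *)
Definition alow (N : nat) (a : nat -> Z) (n : nat) : zbar :=
  if Nat.eqb n 1 then ZNinf else ZFin (a n).
Definition aup (N : nat) (a : nat -> Z) (n : nat) : zbar :=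
  if Nat.eqb n N then ZPinf else ZFin (a (S n)).

Definition in_band (N : nat) (a : nat -> Z) (n : nat) (y : Z) : Prop :=
  zleb (alow N a n) (ZFin y) = true /\ zltb (ZFin y) (aup N a n) = true.

(* underline m_n = floor((a_n + a_{n+1} - 1)/2), overline m_n = ceil(...),
   with the conventions underline m_1 = overline m_1 = -oo and
   underline m_N = overline m_N = +oo (the n = 1 convention takes priority). *)
Definition mlo (N : nat) (a : nat -> Z) (n : nat) : zbar :=
  if Nat.eqb n 1 then ZNinf else if Nat.eqb n N then ZPinf
  else ZFin (Z.div (a n + a (S n) - 1) 2).
Definition mhi (N : nat) (a : nat -> Z) (n : nat) : zbar :=
  if Nat.eqb n 1 then ZNinf else if Nat.eqb n N then ZPinf
  else ZFin (Z.div (a n + a (S n)) 2).   (* ceil(x/2) = floor((x+1)/2) *)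

(* \sum_{j=lo}^{hi} f j, empty (= 0) if hi < lo *)
Definition zsum (f : Z -> R) (lo hi : Z) : R :=
  fold_right Rplus 0
    (map (fun k => f (lo + Z.of_nat k)%Z) (seq 0 (Z.to_nat (hi - lo + 1)))).

(* \sum_{j=lo}^{hi} with extended bounds; an upper bound -oo or a lower bound +oo
   gives the empty sum.  (Infinite ranges never occur under the indicators.) *)
Definition zsumb (f : Z -> R) (lo hi : zbar) : R :=
  match lo, hi with
  | ZFin l, ZFin h => zsum f l h
  | _, _ => 0
  end.

Definition zpred (x : zbar) : zbar :=
  match x with ZFin z => ZFin (z - 1)%Z | w => w end.

(* U(v_n, y, 1), with A(j) = P(j+1), B(j) = P(j-1) *)
Definition U1 (N : nat) (v : nat -> R) (a : nat -> Z) (P : Z -> R) (n : nat) (y : Z) : R :=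
  (if zleb (ZFin y) (mlo N a n)
   then zsumb (fun j => v n - P (j + 1)%Z) (ZFin y) (zpred (alow N a n)) else 0)
  + (if zleb (mhi N a n) (ZFin y)
     then zsumb (fun j => P (j - 1)%Z - v n) (aup N a n) (ZFin y) else 0).

Definition Uf (beta : R) (N : nat) (v : nat -> R) (a : nat -> Z) (P : Z -> R)
    (n : nat) (y : Z) (t : R) : R :=
  U1 N v a P n y +
  (if zleb (mhi N a n) (ZFin y)
   then beta * RInt (fun r => pZ beta P y r - pZ beta P (y - 1)%Z r) t 1
   else beta * RInt (fun r => pZ beta P (y + 1)%Z r - pZ beta P y r) t 1).

Definition lapU (beta : R) (N : nat) (v : nat -> R) (a : nat -> Z) (P : Z -> R)
    (n : nat) (y : Z) (t : R) : R :=
  Uf beta N v a P n (y + 1)%Z t - 2 * Uf beta N v a P n y t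
  + Uf beta N v a P n (y - 1)%Z t.

From Stdlib Require Import Reals ZArith Lia Lra List.
From Coquelicot Require Import Coquelicot.
Open Scope R_scope.

(** The transition function [p(y,t)] solves the backward equation
    [d/dt p(y,t) = beta (2 p(y,t) - p(y+1,t) - p(y-1,t))]: differentiate the double Poisson
    series termwise, using that the time derivative of a Poisson weight is [beta] times the
    weight minus its shift, and that shifting an index moves [y] by one.  Integrating over
    [[t,1]], where [p(.,1) = P], gives [beta (2 I(y) - I(y+1) - I(y-1)) = P(y) - p(y,t)] for
    [I(y) = int_t^1 p(y,r) dr].  Now [U(v_n,.,t)] is [U(v_n,.,1)] plus [beta] times a
    difference of consecutive [I]'s, and the first differences of [U(v_n,.,1)] are
    [P(y) - v_n] outside the band [[a_n, a_{n+1})] and [0] inside it; combined with the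
    identity above this yields the two difference relations.  The parity assumption on
    [a_n + a_{n+1}] makes [overline m_n = underline m_n + 1], where the two one-sided
    formulas for [U] agree; the Laplacian relations then follow from the difference
    relations and [d/dt int_t^1 f = - f(t)]. *)

(** * Termwise differentiation of series *)

Lemma Series_abs_le (a M : nat -> R) :
  (forall n, Rabs (a n) <= M n) -> ex_series M -> Rabs (Series a) <= Series M.
Proof.
  intros HaM HM.
  assert (Habs : ex_series (fun n => Rabs (a n))).
  { apply (ex_series_le (fun n => Rabs (a n)) M); [|exact HM].
    intros n; eapply Rle_trans; [right; apply Rabs_Rabsolu|apply HaM]. }
  eapply Rle_trans; [exact (Series_Rabs a Habs)|].
  apply Series_le; [|exact HM]. intros n; split; [apply Rabs_pos|apply HaM].
Qed.

Lemma Series_tail_abs_le (a M : nat -> R) (n : nat) :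
  (forall k, Rabs (a k) <= M k) -> ex_series M ->
  Rabs (Series a - sum_f_R0 a n) <= Series M - sum_f_R0 M n.
Proof.
  intros HaM HM.
  assert (Ha : ex_series a).
  { apply (ex_series_le a M); [exact HaM|exact HM]. }
  rewrite (Series_incr_n a (S n)), (Series_incr_n M (S n)); try lia; auto.
  simpl pred. ring_simplify (sum_f_R0 a n + Series (fun k => a (S n + k)%nat) - sum_f_R0 a n).
  ring_simplify (sum_f_R0 M n + Series (fun k => M (S n + k)%nat) - sum_f_R0 M n).
  apply Series_abs_le; [intros k; apply HaM|].
  now apply (ex_series_incr_n M (S n)).
Qed.

Lemma CVU_Series_dominated (f : nat -> R -> R) (M : nat -> R) (c : R) (r : posreal) :
  ex_series M -> (forall n x, Boule c r x -> Rabs (f n x) <= M n) ->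
  CVU (fun N x => sum_f_R0 (fun n => f n x) N) (fun x => Series (fun n => f n x)) c r.
Proof.
  intros HM Hf eps Heps.
  assert (HMcv : Un_cv (sum_f_R0 M) (Series M)).
  { apply is_lim_seq_Reals, (is_lim_seq_ext (sum_n M)); [intros; apply sum_n_Reals|].
    now apply Series_correct. }
  destruct (HMcv eps Heps) as [N0 HN0].
  exists N0. intros n x Hn Hx.
  eapply Rle_lt_trans; [apply (Series_tail_abs_le _ M); [intros k; now apply Hf|exact HM]|].
  specialize (HN0 n Hn). unfold Rdist in HN0. rewrite Rabs_minus_sym in HN0.
  eapply Rle_lt_trans; [apply Rle_abs|exact HN0].
Qed.

Lemma is_derive_Series_dominated (f f' : nat -> R -> R) (M : nat -> R) (c : R) (r : posreal) :
  ex_series M ->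
  (forall n x, Boule c r x -> is_derive (f n) x (f' n x)) ->
  (forall n x, Boule c r x -> Rabs (f n x) <= M n) ->
  (forall n x, Boule c r x -> Rabs (f' n x) <= M n) ->
  forall x, Boule c r x ->
  is_derive (fun x => Series (fun n => f n x)) x (Series (fun n => f' n x)).
Proof.
  intros HM Hd Hf Hf' x Hx. apply is_derive_Reals.
  apply (CVU_derivable (fun N y => sum_f_R0 (fun n => f n y) N)
           (fun N y => sum_f_R0 (fun n => f' n y) N)
           (fun y => Series (fun n => f n y)) (fun y => Series (fun n => f' n y)) c r);
    [| |intros n y Hy|exact Hx].
  - now apply CVU_Series_dominated with M.
  - apply CVU_cv. now apply CVU_Series_dominated with M.
  - induction n as [|n IH]; simpl; [|apply derivable_pt_lim_plus; [exact IH|]];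
      now apply is_derive_Reals, Hd.
Qed.

Lemma Series_abs_le_prod (c : nat -> R) (u : nat -> R) (K ui : R) :
  ex_series u -> (forall j, Rabs (c j) <= K * ui * u j) ->
  Rabs (Series c) <= K * Series u * ui.
Proof.
  intros Hu Hc.
  replace (K * Series u * ui) with (Series (fun j => K * ui * u j))
    by (rewrite Series_scal_l; ring).
  apply Series_abs_le; [exact Hc|exact (ex_series_scal_l (K * ui) u Hu)].
Qed.

Lemma is_derive_Series2_dominated (b b' : nat -> nat -> R -> R) (u : nat -> R) (K t : R)
    (r : posreal) :
  ex_series u ->
  (forall i j x, Boule t r x -> is_derive (b i j) x (b' i j x)) ->
  (forall i j x, Boule t r x -> Rabs (b i j x) <= K * u i * u j) ->
  (forall i j x, Boule t r x -> Rabs (b' i j x) <= K * u i * u j) ->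
  is_derive (fun x => Series (fun i => Series (fun j => b i j x))) t
    (Series (fun i => Series (fun j => b' i j t))).
Proof.
  intros Hu Hd Hb Hb'.
  apply (is_derive_Series_dominated (fun i x => Series (fun j => b i j x))
           (fun i x => Series (fun j => b' i j x)) (fun i => K * Series u * u i) t r).
  - exact (ex_series_scal_l (K * Series u) u Hu).
  - intros i x Hx.
    apply (is_derive_Series_dominated (b i) (b' i) (fun j => K * u i * u j) t r); auto.
    exact (ex_series_scal_l (K * u i) u Hu).
  - intros i x Hx. apply Series_abs_le_prod; auto.
  - intros i x Hx. apply Series_abs_le_prod; auto.
  - unfold Boule. rewrite Rminus_eq_0, Rabs_R0. apply cond_pos.
Qed.

(** * Poisson weights *)

Definition lag (f : nat -> R) (k : nat) : R :=
  match k with O => 0 | S k => f k end.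

Lemma ex_series_lag (f : nat -> R) : ex_series f -> ex_series (lag f).
Proof. intros Hf. now apply ex_series_incr_1. Qed.

Lemma is_derive_pois (l : R) (k : nat) :
  is_derive (fun x => pois x k) l (lag (pois l) k - pois l k).
Proof.
  unfold pois. destruct k as [|k]; auto_derive; auto; simpl lag.
  - simpl. field.
  - change (match k with O => 1 | S _ => INR k + 1 end) with (INR (S k)).
    change (INR (fact k + k * fact k)) with (INR (fact (S k))).
    rewrite fact_simpl, mult_INR. simpl pow.
    assert (INR (fact k) <> 0) by apply INR_fact_neq_0.
    assert (INR (S k) <> 0) by (apply not_0_INR; lia).
    field; auto.
Qed.

Lemma is_derive_pois_decay (beta t : R) (k : nat) :
  is_derive (fun s => pois (beta * (1 - s)) k) t
    (beta * (pois (beta * (1 - t)) k - lag (pois (beta * (1 - t))) k)).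
Proof.
  assert (Hl : is_derive (fun s => beta * (1 - s)) t (- beta)) by (auto_derive; auto; ring).
  replace (beta * _) with (scal (- beta) (lag (pois (beta * (1 - t))) k - pois (beta * (1 - t)) k))
    by (unfold scal; simpl; unfold mult; simpl; ring).
  exact (is_derive_comp _ _ t _ _ (is_derive_pois _ k) Hl).
Qed.

Lemma pois_abs_le (l W : R) (k : nat) :
  Rabs l <= W -> Rabs (pois l k) <= exp W * (W ^ k / INR (fact k)).
Proof.
  intros HW. unfold pois, Rdiv.
  rewrite !Rabs_mult, Rabs_inv, <- RPow_abs, (Rabs_pos_eq (exp _)) by (left; apply exp_pos).
  rewrite (Rabs_pos_eq (INR _)) by apply pos_INR.
  assert (Hexp : exp (- l) <= exp W).
  { pose proof (Rabs_maj2 l).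
    destruct (Rle_lt_or_eq_dec (- l) W) as [Hlt|Heq]; [lra|left; now apply exp_increasing|].
    rewrite Heq; lra. }
  assert (Hpow : Rabs l ^ k <= W ^ k) by (apply pow_incr; split; [apply Rabs_pos|exact HW]).
  assert (Hf : 0 < / INR (fact k)) by apply Rinv_0_lt_compat, INR_fact_lt_0.
  rewrite Rmult_assoc. apply Rmult_le_compat; auto using Rlt_le, exp_pos.
  - apply Rmult_le_pos; [apply pow_le, Rabs_pos|lra].
  - apply Rmult_le_compat_r; lra.
Qed.

Lemma ex_series_pow_fact (W : R) : ex_series (fun k => W ^ k / INR (fact k)).
Proof.
  exists (exp W). eapply is_series_ext; [|exact (is_exp_Reals W)].
  intros k. unfold scal; simpl; unfold mult; simpl. rewrite pow_n_pow. unfold Rdiv. ring.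
Qed.

(** * The transition function *)

(* [E Q(y + X - Y)] for independent [X ~ f], [Y ~ g]; [pZ] is the case of two Poisson laws. *)
Definition diff_sum (f g : nat -> R) (Q : Z -> R) (y : Z) : R :=
  Series (fun i => Series (fun j => f i * g j * Q (y + Z.of_nat i - Z.of_nat j)%Z)).

Lemma diff_sum_lag_l (f g : nat -> R) (Q : Z -> R) (y : Z) :
  diff_sum (lag f) g Q y = diff_sum f g Q (y + 1).
Proof.
  unfold diff_sum. rewrite Series_incr_1_aux; simpl lag.
  - apply Series_ext. intros i. apply Series_ext. intros j. do 2 f_equal. lia.
  - rewrite (Series_ext _ (fun j => 0 * (g j * Q (y + Z.of_nat 0 - Z.of_nat j)%Z)))
      by (intros; ring).
    rewrite Series_scal_l. ring.
Qed.

Lemma diff_sum_lag_r (f g : nat -> R) (Q : Z -> R) (y : Z) :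
  diff_sum f (lag g) Q y = diff_sum f g Q (y - 1).
Proof.
  unfold diff_sum. apply Series_ext. intros i.
  rewrite Series_incr_1_aux by (simpl; ring).
  apply Series_ext. intros j. simpl lag. do 2 f_equal. lia.
Qed.

Section Summable.
Variables (f g : nat -> R) (Q : Z -> R) (B : R) (y : Z).
Hypothesis Hf : ex_series (fun k => Rabs (f k)).
Hypothesis Hg : ex_series (fun k => Rabs (g k)).
Hypothesis HQ : forall z, Rabs (Q z) <= B.

Let term i j := f i * g j * Q (y + Z.of_nat i - Z.of_nat j)%Z.

Lemma diff_sum_term_abs_le i j : Rabs (term i j) <= B * Rabs (f i) * Rabs (g j).
Proof.
  unfold term. rewrite !Rabs_mult.
  pose proof (Rabs_pos (f i)); pose proof (Rabs_pos (g j)).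
  specialize (HQ (y + Z.of_nat i - Z.of_nat j)%Z).
  replace (B * Rabs (f i) * Rabs (g j)) with (Rabs (f i) * Rabs (g j) * B) by ring.
  apply Rmult_le_compat_l; [now apply Rmult_le_pos|exact HQ].
Qed.

Lemma ex_series_diff_sum_inner i : ex_series (term i).
Proof.
  apply (ex_series_le (term i) (fun j => B * Rabs (f i) * Rabs (g j))).
  - apply diff_sum_term_abs_le.
  - exact (ex_series_scal_l _ _ Hg).
Qed.

Lemma ex_series_diff_sum_outer : ex_series (fun i => Series (term i)).
Proof.
  apply (ex_series_le (fun i => Series (term i))
           (fun i => B * Series (fun j => Rabs (g j)) * Rabs (f i))).
  - intros i. replace (B * _ * Rabs (f i)) with
      (Series (fun j => B * Rabs (f i) * Rabs (g j))) by (rewrite Series_scal_l; ring).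
    apply Series_abs_le; [apply diff_sum_term_abs_le|exact (ex_series_scal_l _ _ Hg)].
  - exact (ex_series_scal_l _ _ Hf).
Qed.

End Summable.

Lemma Series_laplacian_comb (x y z : nat -> R) (c : R) :
  ex_series x -> ex_series y -> ex_series z ->
  Series (fun k => c * (2 * x k - y k - z k)) = c * (2 * Series x - Series y - Series z).
Proof.
  intros Hx Hy Hz. rewrite Series_scal_l, !Series_minus, Series_scal_l; auto.
  - exact (ex_series_scal_l 2 x Hx).
  - apply (ex_series_minus (fun k => 2 * x k) y); [exact (ex_series_scal_l 2 x Hx)|exact Hy].
Qed.

Lemma diff_sum_laplacian (f g : nat -> R) (Q : Z -> R) (B c : R) (y : Z) :
  ex_series (fun k => Rabs (f k)) -> ex_series (fun k => Rabs (g k)) ->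
  (forall z, Rabs (Q z) <= B) ->
  Series (fun i => Series (fun j =>
    c * (2 * (f i * g j) - lag f i * g j - f i * lag g j) * Q (y + Z.of_nat i - Z.of_nat j)%Z))
  = c * (2 * diff_sum f g Q y - diff_sum f g Q (y + 1) - diff_sum f g Q (y - 1)).
Proof.
  intros Hf Hg HQ.
  assert (Hlf : ex_series (fun k => Rabs (lag f k))) by now apply ex_series_incr_1.
  assert (Hlg : ex_series (fun k => Rabs (lag g k))) by now apply ex_series_incr_1.
  rewrite <- diff_sum_lag_l, <- diff_sum_lag_r. unfold diff_sum.
  rewrite <- Series_laplacian_comb by eauto using ex_series_diff_sum_outer.
  apply Series_ext. intros i.
  rewrite <- Series_laplacian_comb by eauto using ex_series_diff_sum_inner.
  apply Series_ext. intros j. ring.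
Qed.

Lemma Rabs_mult3_le (x y z cx cy B : R) :
  Rabs x <= cx -> Rabs y <= cy -> Rabs z <= B -> Rabs (x * y * z) <= cx * cy * B.
Proof.
  intros Hx Hy Hz. rewrite !Rabs_mult.
  pose proof (Rabs_pos x); pose proof (Rabs_pos y); pose proof (Rabs_pos z).
  apply Rmult_le_compat; auto using Rmult_le_pos, Rmult_le_compat.
Qed.

Lemma ex_series_abs_pois (l : R) : ex_series (fun k => Rabs (pois l k)).
Proof.
  apply (ex_series_le (fun k => Rabs (pois l k))
           (fun k => exp (Rabs l) * (Rabs l ^ k / INR (fact k)))).
  - intros k. eapply Rle_trans; [right; apply Rabs_Rabsolu|now apply pois_abs_le].
  - exact (ex_series_scal_l _ _ (ex_series_pow_fact (Rabs l))).
Qed.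

Lemma pois_decay_dominated (beta t : R) (r : posreal) :
  exists (c : R) (u : nat -> R), ex_series u /\
  forall s k, Boule t r s ->
    Rabs (pois (beta * (1 - s)) k) <= c * u k /\
    Rabs (beta * (pois (beta * (1 - s)) k - lag (pois (beta * (1 - s))) k)) <= c * u k.
Proof.
  set (W := Rabs beta * (Rabs (1 - t) + r)).
  set (e := fun k => W ^ k / INR (fact k)).
  exists (exp W * (1 + Rabs beta)), (fun k => e k + lag e k). split.
  { apply (ex_series_plus e (lag e)); [|apply ex_series_lag]; apply ex_series_pow_fact. }
  intros s k Hs. set (w := pois (beta * (1 - s))).
  assert (HW : 0 <= W) by (pose proof (Rabs_pos beta); pose proof (Rabs_pos (1 - t));
    pose proof (cond_pos r); apply Rmult_le_pos; lra).
  assert (He : forall k, 0 <= e k)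
    by (intros; apply Rmult_le_pos; [now apply pow_le|left; apply Rinv_0_lt_compat, INR_fact_lt_0]).
  assert (Hlage : 0 <= lag e k) by (destruct k; simpl; [lra|apply He]).
  assert (Hwe : forall k, Rabs (w k) <= exp W * e k).
  { intros j. apply pois_abs_le. unfold Boule in Hs.
    rewrite Rabs_mult. apply Rmult_le_compat_l; [apply Rabs_pos|].
    replace (1 - s) with ((1 - t) - (s - t)) by ring.
    eapply Rle_trans; [apply Rabs_triang|]. rewrite Rabs_Ropp. lra. }
  assert (Hlag : Rabs (lag w k) <= exp W * lag e k)
    by (destruct k; simpl; [rewrite Rabs_R0; lra|apply Hwe]).
  assert (Hd : Rabs (w k - lag w k) <= exp W * (e k + lag e k)).
  { unfold Rminus. eapply Rle_trans; [apply Rabs_triang|]. rewrite Rabs_Ropp.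
    pose proof (Hwe k). lra. }
  assert (HeW : 0 <= exp W * (e k + lag e k))
    by (pose proof (exp_pos W); pose proof (He k); apply Rmult_le_pos; lra).
  pose proof (Rabs_pos beta). split.
  - eapply Rle_trans; [apply Hwe|]. pose proof (exp_pos W). nra.
  - rewrite Rabs_mult. eapply Rle_trans; [apply Rmult_le_compat_l; [apply Rabs_pos|exact Hd]|].
    nra.
Qed.

Lemma is_derive_pZ (beta : R) (P : Z -> R) (B : R) (y : Z) (t : R) :
  (forall z, Rabs (P z) <= B) ->
  is_derive (fun s => pZ beta P y s) t
    (beta * (2 * pZ beta P y t - pZ beta P (y + 1) t - pZ beta P (y - 1) t)).
Proof.
  intros HB.
  set (r := mkposreal 1 Rlt_0_1).
  destruct (pois_decay_dominated beta t r) as (c & u & Hu & Hdom).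
  set (w := fun s => pois (beta * (1 - s))).
  set (dw := fun s k => beta * (w s k - lag (w s) k)).
  set (Q := fun i j => P (y + Z.of_nat i - Z.of_nat j)%Z).
  replace (beta * _) with
    (Series (fun i => Series (fun j => (dw t i * w t j + w t i * dw t j) * Q i j))).
  - apply (is_derive_Series2_dominated (fun i j s => w s i * w s j * Q i j)
      (fun i j s => (dw s i * w s j + w s i * dw s j) * Q i j) u (2 * c * c * B) t r Hu).
    + intros i j s _.
      exact (is_derive_scal_l _ s _ _ (is_derive_mult _ _ s _ _
        (is_derive_pois_decay beta s i) (is_derive_pois_decay beta s j) Rmult_comm)).
    + intros i j s Hs. destruct (Hdom s i Hs) as [Hi _], (Hdom s j Hs) as [Hj _].
      pose proof (Rabs_mult3_le _ _ _ _ _ _ Hi Hj (HB (y + Z.of_nat i - Z.of_nat j)%Z)).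
      pose proof (Rabs_pos (w s i * w s j * Q i j)). unfold w, Q in *. lra.
    + intros i j s Hs. destruct (Hdom s i Hs) as [Hi Hi'], (Hdom s j Hs) as [Hj Hj'].
      rewrite Rmult_plus_distr_r. eapply Rle_trans; [apply Rabs_triang|].
      pose proof (Rabs_mult3_le _ _ _ _ _ _ Hi' Hj (HB (y + Z.of_nat i - Z.of_nat j)%Z)).
      pose proof (Rabs_mult3_le _ _ _ _ _ _ Hi Hj' (HB (y + Z.of_nat i - Z.of_nat j)%Z)).
      unfold dw, w, Q in *. lra.
  - change (pZ beta P ?z t) with (diff_sum (w t) (w t) P z).
    rewrite <- (diff_sum_laplacian (w t) (w t) P B beta y (ex_series_abs_pois _)
                  (ex_series_abs_pois _) HB).
    apply Series_ext; intros i; apply Series_ext; intros j. unfold dw, Q. ring.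
Qed.

Lemma Series_head (a : nat -> R) : (forall k, a (S k) = 0) -> Series a = a O.
Proof.
  intros Ha. apply is_series_unique.
  apply (filterlim_ext (fun _ => a O)); [|apply filterlim_const].
  induction x as [|n IH]; [now rewrite sum_O|].
  rewrite sum_Sn, <- IH, Ha. symmetry. apply Rplus_0_r.
Qed.

Lemma pois_0_succ (k : nat) : pois 0 (S k) = 0.
Proof. unfold pois. simpl. unfold Rdiv. ring. Qed.

Lemma pZ_at_1 (beta : R) (P : Z -> R) (y : Z) : pZ beta P y 1 = P y.
Proof.
  unfold pZ. replace (beta * (1 - 1)) with 0 by ring.
  rewrite Series_head.
  - rewrite Series_head by (intros k; rewrite pois_0_succ; ring).
    unfold pois. simpl. rewrite Ropp_0, exp_0, Z.add_0_r, Z.sub_0_r. field.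
  - intros k. rewrite pois_0_succ, Series_head by (intros; ring). ring.
Qed.

Lemma continuous_laplacian_comb (f g h : R -> R) (b x : R) :
  continuous f x -> continuous g x -> continuous h x ->
  continuous (fun r => b * (2 * f r - g r - h r)) x.
Proof.
  intros Hf Hg Hh.
  apply (continuous_mult (K := R_AbsRing) (fun _ => b)); [apply continuous_const|].
  apply (continuous_minus (V := R_NormedModule) (fun r => 2 * f r - g r)); [|exact Hh].
  apply (continuous_minus (V := R_NormedModule) (fun r => 2 * f r)); [|exact Hg].
  apply (continuous_mult (K := R_AbsRing) (fun _ => 2)); [apply continuous_const|exact Hf].
Qed.

Section Integrals.
Variables (beta : R) (P : Z -> R) (B : R).
Hypothesis HB : forall z, Rabs (P z) <= B.

Lemma continuous_pZ (y : Z) (r : R) : continuous (pZ beta P y) r.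
Proof.
  apply (ex_derive_continuous (K := R_AbsRing) (V := R_NormedModule)).
  eexists. now apply is_derive_pZ with B.
Qed.

Lemma continuous_pZ_sub (y z : Z) (r : R) :
  continuous (fun s => pZ beta P y s - pZ beta P z s) r.
Proof. apply (continuous_minus (V := R_NormedModule)); apply continuous_pZ. Qed.

Lemma ex_RInt_pZ (y : Z) (a b : R) : ex_RInt (pZ beta P y) a b.
Proof. apply (ex_RInt_continuous (V := R_CompleteNormedModule)). intros; apply continuous_pZ. Qed.

Lemma RInt_pZ_sub (y z : Z) (t : R) :
  RInt (fun r => pZ beta P y r - pZ beta P z r) t 1
  = RInt (pZ beta P y) t 1 - RInt (pZ beta P z) t 1.
Proof. apply (RInt_minus (V := R_CompleteNormedModule)); apply ex_RInt_pZ. Qed.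

Lemma is_derive_RInt_pZ_sub (y z : Z) (t : R) :
  is_derive (fun s => RInt (fun r => pZ beta P y r - pZ beta P z r) s 1) t
    (pZ beta P z t - pZ beta P y t).
Proof.
  replace (pZ beta P z t - pZ beta P y t) with (opp (pZ beta P y t - pZ beta P z t))
    by (unfold opp; simpl; ring).
  apply (is_derive_RInt' (V := R_CompleteNormedModule)
           (fun r => pZ beta P y r - pZ beta P z r) _ t 1);
    [|apply continuous_pZ_sub].
  apply filter_forall. intros s. apply RInt_correct.
  apply (ex_RInt_continuous (V := R_CompleteNormedModule)). intros; apply continuous_pZ_sub.
Qed.

Lemma RInt_pZ_laplacian (y : Z) (t : R) :
  beta * (2 * RInt (pZ beta P y) t 1 - RInt (pZ beta P (y + 1)) t 1 - RInt (pZ beta P (y - 1)) t 1)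
  = P y - pZ beta P y t.
Proof.
  rewrite <- (pZ_at_1 beta P y).
  assert (Hftc := is_RInt_derive (V := R_CompleteNormedModule) (pZ beta P y)
    (fun r => beta * (2 * pZ beta P y r - pZ beta P (y + 1) r - pZ beta P (y - 1) r)) t 1
    (fun r _ => is_derive_pZ beta P B y r HB)
    (fun r _ => continuous_laplacian_comb _ _ _ beta r
                  (continuous_pZ y r) (continuous_pZ (y + 1) r) (continuous_pZ (y - 1) r))).
  apply is_RInt_unique in Hftc.
  etransitivity; [|exact Hftc]. symmetry. apply is_RInt_unique.
  pose proof (fun z => RInt_correct _ t 1 (ex_RInt_pZ z t 1)) as HI.
  exact (is_RInt_scal _ t 1 beta _ (is_RInt_minus _ _ t 1 _ _
    (is_RInt_minus _ _ t 1 _ _ (is_RInt_scal _ t 1 2 _ (HI y)) (HI (y + 1)%Z)) (HI (y - 1)%Z))).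
Qed.

End Integrals.

Lemma is_derive_const_plus_scal (f : R -> R) (c k t l : R) :
  is_derive f t l -> is_derive (fun s => c + k * f s) t (k * l).
Proof.
  intros Hf. replace (k * l) with (plus zero (k * l)) by (unfold plus, zero; simpl; ring).
  exact (is_derive_plus _ _ t _ _ (is_derive_const c t) (is_derive_scal _ t k _ Hf)).
Qed.

(** * Integer sums and extended integers *)

Lemma zsum_empty (f : Z -> R) (lo hi : Z) : (hi < lo)%Z -> zsum f lo hi = 0.
Proof. intros H. unfold zsum. now replace (Z.to_nat (hi - lo + 1)) with 0%nat by lia. Qed.

Lemma zsum_snoc (f : Z -> R) (lo hi : Z) :
  (lo <= hi + 1)%Z -> zsum f lo (hi + 1) = zsum f lo hi + f (hi + 1)%Z.
Proof.
  intros H. unfold zsum.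
  replace (Z.to_nat (hi + 1 - lo + 1)) with (S (Z.to_nat (hi - lo + 1))) by lia.
  rewrite seq_S, map_app, fold_right_app. simpl.
  replace (lo + Z.of_nat (Z.to_nat (hi - lo + 1)))%Z with (hi + 1)%Z by lia.
  generalize (map (fun k => f (lo + Z.of_nat k)%Z) (seq 0 (Z.to_nat (hi - lo + 1)))).
  intros l. induction l as [|x l IH]; simpl; [ring|rewrite IH; ring].
Qed.

Lemma zsum_cons (f : Z -> R) (lo hi : Z) :
  (lo - 1 <= hi)%Z -> zsum f (lo - 1) hi = f (lo - 1)%Z + zsum f lo hi.
Proof.
  intros H. unfold zsum.
  replace (Z.to_nat (hi - (lo - 1) + 1)) with (S (Z.to_nat (hi - lo + 1))) by lia.
  simpl. rewrite Z.add_0_r. f_equal.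
  rewrite <- seq_shift, map_map. f_equal. apply map_ext. intros k. f_equal. lia.
Qed.

Ltac zbar_order :=
  unfold zltb in *; cbn [zleb andb negb] in *; try reflexivity;
  rewrite ?Bool.andb_true_iff, ?Bool.negb_true_iff, ?Z.leb_le, ?Z.leb_gt in *;
  try discriminate; lia.

Lemma zltb_zleb (x y : zbar) : zltb x y = true -> zleb x y = true.
Proof. unfold zltb. now intros [? ?]%Bool.andb_true_iff. Qed.

Lemma zleb_succ_r (x : zbar) (y : Z) : zleb x (ZFin y) = true -> zleb x (ZFin (y + 1)) = true.
Proof. destruct x; intros; zbar_order. Qed.

Lemma zleb_pred_l (x : zbar) (y : Z) : zleb (ZFin y) x = true -> zleb (ZFin (y - 1)) x = true.
Proof. destruct x; intros; zbar_order. Qed.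

Lemma zltb_zleb_pred (x : zbar) (y : Z) : zltb x (ZFin y) = true -> zleb x (ZFin (y - 1)) = true.
Proof. destruct x; intros; zbar_order. Qed.

Lemma zltb_zleb_succ (x : zbar) (y : Z) : zltb (ZFin y) x = true -> zleb (ZFin (y + 1)) x = true.
Proof. destruct x; intros; zbar_order. Qed.

Lemma midpoint_split (lo hi : Z) :
  (lo < hi)%Z -> ~ (exists z : Z, IZR z = (IZR lo + IZR hi - 1) / 2) ->
  ((lo + hi) / 2 = (lo + hi - 1) / 2 + 1)%Z /\ (lo <= (lo + hi - 1) / 2)%Z
  /\ ((lo + hi - 1) / 2 + 1 < hi)%Z.
Proof.
  intros Hlt Hnot.
  assert (Heven : ((lo + hi) mod 2 = 0)%Z).
  { destruct (Z.eq_dec ((lo + hi) mod 2) 0) as [|Hodd]; [assumption|]. exfalso.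
    apply Hnot. exists ((lo + hi) / 2)%Z.
    assert (E : (lo + hi - 1 = 2 * ((lo + hi) / 2))%Z).
    { pose proof (Z.mod_pos_bound (lo + hi) 2). pose proof (Z.div_mod (lo + hi) 2). lia. }
    apply (f_equal IZR) in E. rewrite minus_IZR, plus_IZR, mult_IZR in E. simpl in E. lra. }
  Z.div_mod_to_equations. lia.
Qed.

Lemma aup_not_ninf (N : nat) (a : nat -> Z) (n : nat) : aup N a n <> ZNinf.
Proof. unfold aup. now destruct (Nat.eqb n N). Qed.

Lemma alow_not_pinf (N : nat) (a : nat -> Z) (n : nat) : alow N a n <> ZPinf.
Proof. unfold alow. now destruct (Nat.eqb n 1). Qed.

Lemma in_band_intro (N : nat) (a : nat -> Z) (n : nat) (y : Z) :
  (n <> 1%nat -> (a n <= y)%Z) -> (n <> N -> (y < a (S n))%Z) -> in_band N a n y.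
Proof.
  intros Hlo Hhi. unfold in_band, alow, aup.
  destruct (Nat.eqb_spec n 1) as [|H1], (Nat.eqb_spec n N) as [|HN];
    split; try reflexivity; try specialize (Hlo H1); try specialize (Hhi HN); zbar_order.
Qed.

Lemma in_band_cover (N : nat) (a : nat -> Z) (k : nat) (y : Z) :
  (1 <= k <= N)%nat -> ((k < N)%nat -> (y < a (S k))%Z) ->
  exists i, (1 <= i <= k)%nat /\ in_band N a i y.
Proof.
  revert y. induction k as [|k IH]; intros y Hk Hy; [lia|].
  destruct (Nat.eq_dec k 0) as [->|Hk0].
  - exists 1%nat. split; [lia|]. apply in_band_intro; [lia|intros; apply Hy; lia].
  - destruct (Z_lt_le_dec y (a (S k))) as [Hlt|Hge].
    + destruct (IH y ltac:(lia) (fun _ => Hlt)) as (i & Hi & Hband).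
      exists i. split; [lia|exact Hband].
    + exists (S k). split; [lia|]. apply in_band_intro; [intros; exact Hge|intros; apply Hy; lia].
Qed.

Lemma Rabs_bounded_upto (f : nat -> R) (n : nat) :
  exists B, forall i, (i <= n)%nat -> Rabs (f i) <= B.
Proof.
  induction n as [|n [B HB]].
  - exists (Rabs (f 0%nat)). intros i Hi. replace i with 0%nat by lia. lra.
  - exists (Rmax B (Rabs (f (S n)))). intros i Hi.
    destruct (Nat.eq_dec i (S n)) as [->|Hne]; [apply Rmax_r|].
    eapply Rle_trans; [apply HB; lia|apply Rmax_l].
Qed.

Lemma P_bounded (N : nat) (v : nat -> R) (a : nat -> Z) (P : Z -> R) :
  (1 <= N)%nat ->
  (forall (i : nat) (y : Z), (1 <= i <= N)%nat -> in_band N a i y -> P y = v i) ->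
  exists B, forall z, Rabs (P z) <= B.
Proof.
  intros HN HP. destruct (Rabs_bounded_upto v N) as [B HB]. exists B. intros z.
  destruct (in_band_cover N a N z ltac:(lia) ltac:(lia)) as (i & Hi & Hband).
  rewrite (HP i z Hi Hband). apply HB. lia.
Qed.

(** * The value function *)

Section ValueFunction.
Variables (beta : R) (N : nat) (v : nat -> R) (a : nat -> Z) (P : Z -> R) (n : nat) (B t : R).
Hypothesis Hn : (1 <= n <= N)%nat.
Hypothesis Ha : forall i : nat, (2 <= i)%nat -> (i < N)%nat -> (a i < a (S i))%Z.
Hypothesis Hodd : forall i : nat, (2 <= i)%nat -> (i < N)%nat ->
  ~ exists z : Z, IZR z = (IZR (a i) + IZR (a (S i)) - 1) / 2.
Hypothesis HP : forall (i : nat) (y : Z), (1 <= i <= N)%nat -> in_band N a i y -> P y = v i.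
Hypothesis HB : forall z, Rabs (P z) <= B.

Lemma midpoint_cases :
  (exists m, mlo N a n = ZFin m /\ mhi N a n = ZFin (m + 1)
     /\ zleb (alow N a n) (ZFin m) = true /\ zltb (ZFin (m + 1)) (aup N a n) = true)
  \/ (mlo N a n = ZNinf /\ mhi N a n = ZNinf /\ alow N a n = ZNinf)
  \/ (mlo N a n = ZPinf /\ mhi N a n = ZPinf /\ aup N a n = ZPinf).
Proof.
  unfold mlo, mhi, alow, aup.
  destruct (Nat.eqb_spec n 1) as [H1|H1]; [now right; left|].
  destruct (Nat.eqb_spec n N) as [HN|HN]; [now right; right|].
  left. destruct (midpoint_split (a n) (a (S n))) as (Hhi & Hlo & Hup);
    [apply Ha; lia|apply Hodd; lia|].
  exists ((a n + a (S n) - 1) / 2)%Z. rewrite Hhi. repeat split; zbar_order.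
Qed.

Lemma mlo_negb_mhi (y : Z) :
  zleb (ZFin y) (mlo N a n) = negb (zleb (mhi N a n) (ZFin y)).
Proof.
  destruct midpoint_cases as [(m & -> & -> & _)|[(-> & -> & _)|(-> & -> & _)]]; try reflexivity.
  cbn. destruct (Z.leb_spec y m), (Z.leb_spec (m + 1) y); reflexivity || lia.
Qed.

Lemma mhi_false_of_mlo (y : Z) :
  zleb (ZFin y) (mlo N a n) = true -> zleb (mhi N a n) (ZFin y) = false.
Proof. intros Hy. rewrite mlo_negb_mhi in Hy. now apply Bool.negb_true_iff. Qed.

Lemma mhi_alow (y : Z) :
  zleb (mhi N a n) (ZFin y) = true -> zleb (alow N a n) (ZFin y) = true.
Proof.
  destruct midpoint_cases as [(m & _ & -> & Hal & _)|[(_ & _ & ->)|(_ & -> & _)]];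
    intros Hy; try reflexivity; [|discriminate].
  destruct (alow N a n); zbar_order.
Qed.

Lemma mlo_aup (y : Z) :
  zleb (ZFin y) (mlo N a n) = true -> zltb (ZFin y) (aup N a n) = true.
Proof.
  destruct midpoint_cases as [(m & -> & _ & _ & Hau)|[(-> & _ & _)|(_ & _ & ->)]];
    intros Hy; try reflexivity; [|discriminate].
  destruct (aup N a n); zbar_order.
Qed.

Lemma U1_succ_right (y : Z) :
  zleb (mhi N a n) (ZFin y) = true -> U1 N v a P n (y + 1) - U1 N v a P n y = P y - v n.
Proof.
  intros Hy.
  assert (Hy1 := zleb_succ_r _ _ Hy).
  assert (Hband : zltb (ZFin y) (aup N a n) = true -> P y = v n)
    by (intros; apply HP; [lia|split; auto using mhi_alow]).
  unfold U1. rewrite !mlo_negb_mhi, Hy, Hy1. cbn [negb].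
  pose proof (aup_not_ninf N a n).
  destruct (aup N a n) as [b| |]; cbn [zsumb]; [|easy|rewrite Hband by reflexivity; ring].
  destruct (Z_lt_le_dec (y + 1) b).
  - rewrite !zsum_empty, Hband by (zbar_order || lia). ring.
  - rewrite zsum_snoc by lia. replace (y + 1 - 1)%Z with y by ring. ring.
Qed.

Lemma U1_pred_left (y : Z) :
  zleb (ZFin y) (mlo N a n) = true -> U1 N v a P n y - U1 N v a P n (y - 1) = P y - v n.
Proof.
  intros Hy.
  assert (Hy1 := zleb_pred_l _ _ Hy).
  assert (Hband : zleb (alow N a n) (ZFin y) = true -> P y = v n)
    by (intros; apply HP; [lia|split; auto using mlo_aup]).
  unfold U1. rewrite Hy, Hy1, (mhi_false_of_mlo _ Hy), (mhi_false_of_mlo _ Hy1).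
  pose proof (alow_not_pinf N a n).
  destruct (alow N a n) as [b| |]; cbn [zsumb zpred];
    [|rewrite Hband by reflexivity; ring|easy].
  destruct (Z_lt_le_dec b y).
  - rewrite !zsum_empty, Hband by (zbar_order || lia). ring.
  - rewrite zsum_cons by lia. replace (y - 1 + 1)%Z with y by ring. ring.
Qed.

Lemma U1_midpoint (y z : Z) :
  mhi N a n = ZFin y -> mlo N a n = ZFin z -> z = (y - 1)%Z /\ U1 N v a P n y = U1 N v a P n z.
Proof.
  destruct midpoint_cases as [(m & Hlo & Hhi & Hal & Hau)|[(Hlo & _)|(Hlo & _)]];
    rewrite Hlo; intros Hy Hz; try discriminate.
  rewrite Hhi in Hy. injection Hy as <-. injection Hz as <-. split; [ring|].
  unfold U1. rewrite Hlo, Hhi. cbn [zleb]. rewrite !Z.leb_refl.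
  replace (m + 1 <=? m)%Z with false by (symmetry; apply Z.leb_gt; lia).
  destruct (aup N a n) as [b| |]; destruct (alow N a n) as [c| |]; cbn [zsumb zpred];
    rewrite ?zsum_empty by zbar_order; ring.
Qed.

Let U y := Uf beta N v a P n y t.
Let I y := RInt (pZ beta P y) t 1.

Lemma Uf_right (y : Z) : zleb (mhi N a n) (ZFin y) = true ->
  U y = U1 N v a P n y + beta * (I y - I (y - 1)%Z).
Proof. intros Hy. unfold U, Uf. now rewrite Hy, (RInt_pZ_sub _ _ _ HB). Qed.

Lemma Uf_left (y : Z) : zleb (mhi N a n) (ZFin y) = false ->
  U y = U1 N v a P n y + beta * (I (y + 1)%Z - I y).
Proof. intros Hy. unfold U, Uf. now rewrite Hy, (RInt_pZ_sub _ _ _ HB). Qed.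

Lemma Uf_sub_succ_right (y : Z) : zleb (mhi N a n) (ZFin y) = true ->
  U y - U (y + 1)%Z = v n - pZ beta P y t.
Proof.
  intros Hy. rewrite (Uf_right y Hy), (Uf_right (y + 1) (zleb_succ_r _ _ Hy)).
  replace (y + 1 - 1)%Z with y by ring.
  pose proof (U1_succ_right y Hy).
  pose proof (RInt_pZ_laplacian beta P B HB y t). unfold I. lra.
Qed.

Lemma Uf_sub_pred_left (y : Z) : zleb (ZFin y) (mlo N a n) = true ->
  U y - U (y - 1)%Z = pZ beta P y t - v n.
Proof.
  intros Hy. pose proof (zleb_pred_l _ _ Hy) as Hy1.
  rewrite (Uf_left y (mhi_false_of_mlo y Hy)), (Uf_left (y - 1) (mhi_false_of_mlo _ Hy1)).
  replace (y - 1 + 1)%Z with y by ring.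
  pose proof (U1_pred_left y Hy).
  pose proof (RInt_pZ_laplacian beta P B HB y t). unfold I. lra.
Qed.

Lemma Uf_midpoint (y z : Z) : mhi N a n = ZFin y -> mlo N a n = ZFin z ->
  z = (y - 1)%Z /\ U y = U z.
Proof.
  intros Hy Hz. destruct (U1_midpoint y z Hy Hz) as [-> HU1].
  split; [reflexivity|].
  rewrite (Uf_right y), (Uf_left (y - 1)), HU1; [|rewrite Hy; cbn; apply Z.leb_gt; lia|].
  - now replace (y - 1 + 1)%Z with y by ring.
  - rewrite Hy. cbn. apply Z.leb_refl.
Qed.

Lemma is_derive_Uf (y : Z) :
  is_derive (fun s => Uf beta N v a P n y s) t
    (if zleb (mhi N a n) (ZFin y) then beta * (pZ beta P (y - 1) t - pZ beta P y t)
     else beta * (pZ beta P y t - pZ beta P (y + 1) t)).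
Proof.
  unfold Uf. destruct (zleb (mhi N a n) (ZFin y));
    apply is_derive_const_plus_scal, (is_derive_RInt_pZ_sub _ _ _ HB).
Qed.

Lemma is_derive_Uf_off_midpoint (y : Z) :
  zltb (mhi N a n) (ZFin y) = true \/ zltb (ZFin y) (mlo N a n) = true ->
  is_derive (fun s => Uf beta N v a P n y s) t (0 - beta * lapU beta N v a P n y t).
Proof.
  pose proof (is_derive_Uf y) as D. unfold lapU. fold (U y) (U (y + 1)%Z) (U (y - 1)%Z).
  intros [Hy|Hy].
  - pose proof (zltb_zleb _ _ Hy) as Hy0. pose proof (zltb_zleb_pred _ _ Hy) as Hy1.
    rewrite Hy0 in D. pose proof (Uf_sub_succ_right y Hy0).
    pose proof (Uf_sub_succ_right (y - 1) Hy1). replace (y - 1 + 1)%Z with y in * by ring.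
    replace (0 - _) with (beta * (pZ beta P (y - 1) t - pZ beta P y t)) by nra. exact D.
  - pose proof (zltb_zleb _ _ Hy) as Hy0. pose proof (zltb_zleb_succ _ _ Hy) as Hy1.
    rewrite (mhi_false_of_mlo y Hy0) in D. pose proof (Uf_sub_pred_left y Hy0).
    pose proof (Uf_sub_pred_left (y + 1) Hy1). replace (y + 1 - 1)%Z with y in * by ring.
    replace (0 - _) with (beta * (pZ beta P y t - pZ beta P (y + 1) t)) by nra. exact D.
Qed.

Lemma is_derive_Uf_upper_midpoint (y z : Z) : mhi N a n = ZFin y -> mlo N a n = ZFin z ->
  is_derive (fun s => Uf beta N v a P n y s) t
    ((pZ beta P z t - v n) * beta - beta * lapU beta N v a P n y t).
Proof.
  intros Hy Hz. destruct (Uf_midpoint y z Hy Hz) as [-> Hmid].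
  assert (Hr : zleb (mhi N a n) (ZFin y) = true) by (rewrite Hy; cbn; apply Z.leb_refl).
  pose proof (is_derive_Uf y) as D. rewrite Hr in D.
  pose proof (Uf_sub_succ_right y Hr). unfold lapU. fold (U y) (U (y + 1)%Z) (U (y - 1)%Z).
  replace (_ - _) with (beta * (pZ beta P (y - 1) t - pZ beta P y t)) by nra. exact D.
Qed.

Lemma is_derive_Uf_lower_midpoint (y z : Z) : mlo N a n = ZFin y -> mhi N a n = ZFin z ->
  is_derive (fun s => Uf beta N v a P n y s) t
    ((v n - pZ beta P z t) * beta - beta * lapU beta N v a P n y t).
Proof.
  intros Hy Hz. destruct (Uf_midpoint z y Hz Hy) as [Hzy Hmid].
  replace z with (y + 1)%Z in * by lia.
  assert (Hl : zleb (ZFin y) (mlo N a n) = true) by (rewrite Hy; cbn; apply Z.leb_refl).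
  pose proof (is_derive_Uf y) as D. rewrite (mhi_false_of_mlo y Hl) in D.
  pose proof (Uf_sub_pred_left y Hl). unfold lapU. fold (U y) (U (y + 1)%Z) (U (y - 1)%Z).
  replace (_ - _) with (beta * (pZ beta P y t - pZ beta P (y + 1) t)) by nra. exact D.
Qed.

End ValueFunction.

Theorem lemma4p3 (beta : R) (N : nat) (v : nat -> R) (a : nat -> Z) (P : Z -> R) :
  0 < beta ->
  (1 <= N)%nat ->
  (forall i : nat, (1 <= i)%nat -> (i < N)%nat -> v i < v (S i)) ->
  (forall i : nat, (2 <= i)%nat -> (i < N)%nat -> (a i < a (S i))%Z) ->
  (forall i : nat, (2 <= i)%nat -> (i < N)%nat ->
     ~ exists z : Z, IZR z = (IZR (a i) + IZR (a (S i)) - 1) / 2) ->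
  (forall (i : nat) (y : Z), (1 <= i <= N)%nat -> in_band N a i y -> P y = v i) ->
  forall n : nat, (1 <= n <= N)%nat ->
  forall t : R, 0 <= t < 1 ->
  (forall y : Z,
     zltb (mhi N a n) (ZFin y) = true \/ zltb (ZFin y) (mlo N a n) = true ->
     is_derive (fun s => Uf beta N v a P n y s) t
       (0 - beta * lapU beta N v a P n y t)) /\
  (forall y z : Z, mhi N a n = ZFin y -> mlo N a n = ZFin z ->
     is_derive (fun s => Uf beta N v a P n y s) t
       ((pZ beta P z t - v n) * beta - beta * lapU beta N v a P n y t)) /\
  (forall y z : Z, mlo N a n = ZFin y -> mhi N a n = ZFin z ->
     is_derive (fun s => Uf beta N v a P n y s) t
       ((v n - pZ beta P z t) * beta - beta * lapU beta N v a P n y t)) /\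
  (forall y : Z, zleb (mhi N a n) (ZFin y) = true ->
     Uf beta N v a P n y t - Uf beta N v a P n (y + 1)%Z t - (v n - pZ beta P y t) = 0) /\
  (forall y : Z, zleb (ZFin y) (mlo N a n) = true ->
     Uf beta N v a P n y t - Uf beta N v a P n (y - 1)%Z t + (v n - pZ beta P y t) = 0).
Proof.
  intros _ HN _ Ha Hodd HP n Hn t _.
  destruct (P_bounded N v a P HN HP) as [B HB].
  split; [|split; [|split; [|split]]].
  - exact (is_derive_Uf_off_midpoint beta N v a P n B t Hn Ha Hodd HP HB).
  - exact (is_derive_Uf_upper_midpoint beta N v a P n B t Hn Ha Hodd HP HB).
  - exact (is_derive_Uf_lower_midpoint beta N v a P n B t Hn Ha Hodd HP HB).
  - intros y Hy. pose proof (Uf_sub_succ_right beta N v a P n B t Hn Ha Hodd HP HB y Hy). lra.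
  - intros y Hy. pose proof (Uf_sub_pred_left beta N v a P n B t Hn Ha Hodd HP HB y Hy). lra.
Qed.
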